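(* Consider a sequence of finite populations whose size $N\to\infty$, each equipped with its own randomized design, exposure mapping and fixed potential outcomes as in the context, and fix two exposures $d_k,d_l$. Assume: (Condition 1) there is a constant $c<\infty$, not depending on $N$, such that $|y_i(d)|/\pi_i(d)\le c$ for all units $i$, all exposures $d$, and all populations in the sequence; (Condition 2) for each pair $(a,b)\in\{k,l\}^2$, setting $g_{ij}=0$ if $\pi_{ij}(d_a,d_b)=\pi_i(d_a)\pi_j(d_b)$ and $g_{ij}=1$ otherwise, one has $\sum_{i=1}^N\sum_{j=1}^N g_{ij}=o(N^2)$. Then $\widehat{\tau_{HT}}(d_k,d_l)-\tau(d_k,d_l)\to 0$ in probability as $N\to\infty$, where $\widehat{\tau_{HT}}(d_k,d_l)=\frac1N\sum_{i=1}^N\Big[\frac{\mathbf{I}(D_i=d_k)y_i(d_k)}{\pi_i(d_k)}-\frac{\mathbf{I}(D_i=d_l)y_i(d_l)}{\pi_i(d_l)}\Big]$ and $\tau(d_k,d_l)=\frac1N\sum_{i=1}^N[y_i(d_k)-y_i(d_l)]$.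
   Context: For each population in the sequence: units $i=1,\dots,N$; a random treatment assignment vector $\mathbf{Z}$ with known distribution on a finite set $\Omega$; an exposure mapping $f:\Omega\times\Theta\to\Delta$ (finite set of exposures) with unit traits $\theta_i$, giving $D_i=f(\mathbf{Z},\theta_i)$; $\pi_i(d)=\Pr(D_i=d)\in(0,1)$; $\pi_{ij}(d,d')=\Pr(D_i=d,D_j=d')$ (so $\pi_{ij}(d,d)$ is the joint probability that both $i$ and $j$ receive $d$). Potential outcomes $y_i(d)$ are fixed reals and the observed outcome is $y_i(D_i)$. The design, exposure mapping and potential outcomes may change along the sequence (in the paper the sequence is formed by pooling $B$ subpopulations of sizes $n_b\ge1$ and letting $B\to\infty$). *)

From mathcomp Require Import all_boot all_order all_algebra.
From mathcomp Require Import all_classical all_reals all_analysis.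
Set Implicit Arguments. Unset Strict Implicit. Unset Printing Implicit Defensive.
Import Order.TTheory GRing.Theory Num.Theory.
Local Open Scope ring_scope.

Section Design.
Variables (R : realType) (Omega : finType) (P : Omega -> R).

Definition prob (A : pred Omega) : R := \sum_(w | A w) P w.

Definition is_design : Prop := (forall w, 0 <= P w) /\ \sum_w P w = 1.

Variables (Delta Theta : Type) (N : nat).
Variables (f : Omega -> Theta -> Delta) (theta : 'I_N -> Theta).

Definition exposure (w : Omega) (i : 'I_N) : Delta := f w (theta i).
End Design.

Section Exposures.
Variables (R : realType) (Omega : finType) (P : Omega -> R).
Variables (Delta : eqType) (Theta : Type) (N : nat).
Variables (f : Omega -> Theta -> Delta) (theta : 'I_N -> Theta).

Definition pi1 (i : 'I_N) (d : Delta) : R :=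
  prob P (fun w => exposure f theta w i == d).

Definition pi2 (i j : 'I_N) (d d' : Delta) : R :=
  prob P (fun w => (exposure f theta w i == d) && (exposure f theta w j == d')).

Definition gdep (i j : 'I_N) (d d' : Delta) : nat :=
  (pi2 i j d d' != pi1 i d * pi1 j d')%R.

Variable y : 'I_N -> Delta -> R.

Definition tauHT (dk dl : Delta) (w : Omega) : R :=
  (N%:R)^-1 * \sum_(i < N)
     ((exposure f theta w i == dk)%:R * y i dk / pi1 i dk
      - (exposure f theta w i == dl)%:R * y i dl / pi1 i dl).

Definition tau (dk dl : Delta) : R :=
  (N%:R)^-1 * \sum_(i < N) (y i dk - y i dl).
End Exposures.

From mathcomp Require Import all_boot all_order all_algebra.
From mathcomp Require Import all_classical all_reals all_analysis.
From mathcomp Require Import ring lra.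
Set Implicit Arguments. Unset Strict Implicit. Unset Printing Implicit Defensive.
Import Order.TTheory GRing.Theory Num.Theory numFieldNormedType.Exports.
Local Open Scope ring_scope.

(* Chebyshev's inequality bounds the probability of a deviation by
   E[(tauHT - tau)^2] / eps^2.  The error tauHT - tau is N^-1 sum_i e_i, where
   e_i = y_i(dk)/pi_i(dk) (1[D_i = dk] - pi_i(dk)) - (the same for dl) is centred.
   E[e_i e_j] is a combination of four covariances of exposure indicators with
   coefficients bounded by c^2; each covariance is at most 1 in absolute value
   and vanishes when g_ij = 0.  Hence the second moment is at most
   c^2 N^-2 sum_(a,b) sum_ij g_ij(a,b), which tends to 0 by Condition 2. *)

Section DiscreteExpectation.
Variables (R : realType) (Omega : finType) (P : Omega -> R).
Hypothesis P_design : is_design P.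

Definition expect (X : Omega -> R) : R := \sum_w P w * X w.

Lemma eq_expect (X Y : Omega -> R) : X =1 Y -> expect X = expect Y.
Proof. by move=> eXY; apply: eq_bigr => w _; rewrite eXY. Qed.

Lemma expectD (X Y : Omega -> R) :
  expect (fun w => X w + Y w) = expect X + expect Y.
Proof. by rewrite -big_split; apply: eq_bigr => w _; rewrite mulrDr. Qed.

Lemma expectB (X Y : Omega -> R) :
  expect (fun w => X w - Y w) = expect X - expect Y.
Proof. by rewrite -sumrB; apply: eq_bigr => w _; rewrite mulrBr. Qed.

Lemma expectZ (k : R) (X : Omega -> R) :
  expect (fun w => k * X w) = k * expect X.
Proof. by rewrite mulr_sumr; apply: eq_bigr => w _; rewrite mulrCA. Qed.

Lemma expect_cst (k : R) : expect (fun=> k) = k.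
Proof. by case: P_design => _ P1; rewrite /expect -mulr_suml P1 mul1r. Qed.

Lemma expect_indicator (A : pred Omega) : expect (fun w => (A w)%:R) = prob P A.
Proof.
rewrite /prob [RHS]big_mkcond; apply: eq_bigr => w _.
by case: (A w); rewrite ?mulr1 ?mulr0.
Qed.

Lemma prob_ge0 (A : pred Omega) : 0 <= prob P A.
Proof. by case: P_design => P_ge0 _; apply: sumr_ge0 => w _. Qed.

Lemma prob_le1 (A : pred Omega) : prob P A <= 1.
Proof.
case: P_design => P_ge0 <-; rewrite /prob [leRHS](bigID A) /= lerDl.
by apply: sumr_ge0 => w _.
Qed.

Lemma prob_gt_le_expect_sqr (X : Omega -> R) (eps : R) : 0 < eps ->
  prob P (fun w => eps < `|X w|) <= expect (fun w => X w ^+ 2) / eps ^+ 2.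
Proof.
move=> eps_gt0; case: P_design => P_ge0 _.
rewrite /prob big_mkcond /expect mulr_suml; apply: ler_sum => w _.
rewrite -mulrA; case: ifP => [lt_eps_X|_]; last first.
  by rewrite mulr_ge0 // divr_ge0 // ?sqr_ge0 // exprn_ge0 // ltW.
rewrite -[leLHS]mulr1 ler_wpM2l // ler_pdivlMr ?exprn_gt0 // mul1r.
by rewrite -[X w ^+ 2]real_normK ?num_real //; nra.
Qed.

Lemma norm_centered_indicator_le1 (A : pred Omega) w :
  `|(A w)%:R - prob P A| <= 1.
Proof.
have := prob_ge0 A; have := prob_le1 A; case: (A w) => /= p1 p0.
  by rewrite ger0_norm; lra.
by rewrite sub0r normrN ger0_norm.
Qed.

Lemma expect_centered_indicatorM (A B : pred Omega) :
  expect (fun w => ((A w)%:R - prob P A) * ((B w)%:R - prob P B))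
  = prob P (fun w => A w && B w) - prob P A * prob P B.
Proof.
rewrite (@eq_expect _ (fun w => (A w && B w)%:R - prob P B * (A w)%:R
                                - prob P A * (B w)%:R + prob P A * prob P B)).
  by rewrite expectD !expectB !expectZ expect_cst !expect_indicator; ring.
by move=> w; case: (A w); case: (B w) => /=; ring.
Qed.

Lemma norm_expect_centered_indicatorM_le (A B : pred Omega) :
  `|expect (fun w => ((A w)%:R - prob P A) * ((B w)%:R - prob P B))|
  <= (prob P (fun w => A w && B w) != prob P A * prob P B)%:R.
Proof.
case: eqP => [indep|_] /=.
  by rewrite expect_centered_indicatorM indep subrr normr0.
case: P_design => P_ge0 P1; apply: le_trans (ler_norm_sum _ _ _) _.
rewrite -[leRHS]P1; apply: ler_sum => w _.
rewrite normrM (ger0_norm (P_ge0 w)) ler_piMr //.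
by rewrite normrM -[leRHS]mulr1 ler_pM ?norm_centered_indicator_le1.
Qed.

Lemma expect_sqr_sum (I : finType) (e : I -> Omega -> R) :
  expect (fun w => (\sum_i e i w) ^+ 2)
  = \sum_i \sum_j expect (fun w => e i w * e j w).
Proof.
rewrite /expect; under [RHS]eq_bigr do rewrite exchange_big /=.
rewrite exchange_big /=; apply: eq_bigr => w _.
rewrite expr2 big_distrlr mulr_sumr; apply: eq_bigr => i _ /=.
by rewrite mulr_sumr.
Qed.

End DiscreteExpectation.

Section HorvitzThompson.
Variables (R : realType) (Omega : finType) (P : Omega -> R).
Variables (Delta : eqType) (Theta : Type) (N : nat).
Variables (f : Omega -> Theta -> Delta) (theta : 'I_N -> Theta).
Variables (y : 'I_N -> Delta -> R) (dk dl : Delta) (c : R).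
Hypothesis P_design : is_design P.

Local Notation pi := (pi1 P f theta).
Local Notation g := (gdep P f theta).

Hypothesis pi_gt0 : forall i d, 0 < pi i d.
Hypothesis ipw_outcome_bounded : forall i d, `|y i d| / pi i d <= c.

Definition exposed (i : 'I_N) (d : Delta) : pred Omega :=
  fun w => exposure f theta w i == d.

Definition ipw_outcome (i : 'I_N) (d : Delta) : R := y i d / pi i d.

Definition centered_exposure (i : 'I_N) (d : Delta) (w : Omega) : R :=
  (exposed i d w)%:R - pi i d.

Definition ht_error (i : 'I_N) (w : Omega) : R :=
  ipw_outcome i dk * centered_exposure i dk w
  - ipw_outcome i dl * centered_exposure i dl w.

Definition exposure_cov (i j : 'I_N) (a b : Delta) : R :=
  expect P (fun w => centered_exposure i a w * centered_exposure j b w).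

Definition dependence_density (a b : Delta) : R :=
  (\sum_(i < N) \sum_(j < N) g i j a b)%:R / N%:R ^+ 2.

Lemma tauHT_sub_tau w :
  tauHT P f theta y dk dl w - tau y dk dl = N%:R^-1 * \sum_i ht_error i w.
Proof.
rewrite /tauHT /tau -mulrBr -sumrB; congr (_ * _); apply: eq_bigr => i _.
rewrite /ht_error /ipw_outcome /centered_exposure; field.
by rewrite !gt_eqF ?pi_gt0.
Qed.

Lemma norm_ipw_outcome_le i d : `|ipw_outcome i d| <= c.
Proof. by rewrite normrM normfV (gtr0_norm (pi_gt0 i d)). Qed.

Lemma norm_exposure_cov_le i j a b : `|exposure_cov i j a b| <= (g i j a b)%:R.
Proof. exact: norm_expect_centered_indicatorM_le. Qed.

Lemma expect_ht_errorM i j :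
  expect P (fun w => ht_error i w * ht_error j w) =
    ipw_outcome i dk * ipw_outcome j dk * exposure_cov i j dk dk
  - ipw_outcome i dk * ipw_outcome j dl * exposure_cov i j dk dl
  - ipw_outcome i dl * ipw_outcome j dk * exposure_cov i j dl dk
  + ipw_outcome i dl * ipw_outcome j dl * exposure_cov i j dl dl.
Proof.
rewrite /exposure_cov -!expectZ -!expectB -expectD; apply: eq_expect => w.
by rewrite /ht_error; ring.
Qed.

Lemma norm_expect_ht_errorM_le i j :
  `|expect P (fun w => ht_error i w * ht_error j w)|
  <= c ^+ 2 * (g i j dk dk + g i j dk dl + g i j dl dk + g i j dl dl)%:R.
Proof.
have term_le a b : `|ipw_outcome i a * ipw_outcome j b * exposure_cov i j a b|
    <= c ^+ 2 * (g i j a b)%:R.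
  rewrite normrM expr2 ler_pM ?norm_exposure_cov_le //.
  by rewrite normrM ler_pM ?norm_ipw_outcome_le.
rewrite expect_ht_errorM !natrD !mulrDr.
apply: le_trans (ler_normD _ _) _; apply: lerD => //.
apply: le_trans (ler_normB _ _) _; apply: lerD => //.
by apply: le_trans (ler_normB _ _) _; apply: lerD.
Qed.

Lemma expect_sqr_tauHT_sub_tau :
  expect P (fun w => (tauHT P f theta y dk dl w - tau y dk dl) ^+ 2)
  = N%:R^-1 ^+ 2 * \sum_i \sum_j expect P (fun w => ht_error i w * ht_error j w).
Proof.
rewrite -expect_sqr_sum -expectZ; apply: eq_expect => w.
by rewrite tauHT_sub_tau exprMn.
Qed.

Lemma prob_ht_deviation_le eps : 0 < eps ->
  prob P (fun w => eps < `|tauHT P f theta y dk dl w - tau y dk dl|)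
  <= (c / eps) ^+ 2 * (dependence_density dk dk + dependence_density dk dl
                      + dependence_density dl dk + dependence_density dl dl).
Proof.
move=> eps_gt0; apply: le_trans (prob_gt_le_expect_sqr P_design _ eps_gt0) _.
have pair_sum_le : \sum_i \sum_j expect P (fun w => ht_error i w * ht_error j w)
    <= c ^+ 2 * \sum_i \sum_j
         (g i j dk dk + g i j dk dl + g i j dl dk + g i j dl dl)%:R.
  rewrite mulr_sumr; apply: ler_sum => i _.
  rewrite mulr_sumr; apply: ler_sum => j _.
  exact: le_trans (ler_norm _) (norm_expect_ht_errorM_le i j).
have -> : (c / eps) ^+ 2 * (dependence_density dk dk + dependence_density dk dl
                      + dependence_density dl dk + dependence_density dl dl)
    = N%:R^-1 ^+ 2 * (c ^+ 2 * \sum_i \sum_j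
        (g i j dk dk + g i j dk dl + g i j dl dk + g i j dl dl)%:R) / eps ^+ 2.
  rewrite /dependence_density -!mulrDl -!natrD -!big_split /=.
  under eq_bigr do rewrite -!big_split /=.
  under [in RHS]eq_bigr do rewrite -natr_sum.
  by rewrite -natr_sum expr_div_n exprVn; ring.
rewrite expect_sqr_tauHT_sub_tau; apply: ler_wpM2r.
  by rewrite invr_ge0 exprn_ge0 // ltW.
by apply: ler_wpM2l; rewrite // exprn_ge0 // invr_ge0.
Qed.

End HorvitzThompson.

Local Open Scope classical_set_scope.

Theorem mainTheorem4 (R : realType) (Delta : finType)
  (N : nat -> nat) (Omega : nat -> finType) (P : forall m, Omega m -> R)
  (Theta : nat -> Type) (f : forall m, Omega m -> Theta m -> Delta)
  (theta : forall m, 'I_(N m) -> Theta m)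
  (y : forall m, 'I_(N m) -> Delta -> R) (dk dl : Delta) (c : R) :
  ((fun m => (N m)%:R : R) @ \oo --> +oo) ->
  (forall m, is_design (P m)) ->
  (forall m (i : 'I_(N m)) (d : Delta),
      0 < pi1 (P m) (f m) (theta m) i d < 1) ->
  (forall m (i : 'I_(N m)) (d : Delta),
      `|y m i d| / pi1 (P m) (f m) (theta m) i d <= c) ->
  (forall a b, a \in [:: dk; dl] -> b \in [:: dk; dl] ->
     (fun m => (\sum_(i < N m) \sum_(j < N m)
                  gdep (P m) (f m) (theta m) i j a b)%:R / ((N m)%:R ^+ 2) : R)
       @ \oo --> 0) ->
  forall eps : R, 0 < eps ->
    (fun m => prob (P m) (fun w =>
        eps < `|tauHT (P m) (f m) (theta m) (y m) dk dl w
                - tau (y m) dk dl|)) @ \oo --> 0.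
Proof.
(* The deviation bound holds in every population. *)
move=> _ P_design pi_in01 ipw_bounded sparse eps eps_gt0.
have pi_gt0 m i d : 0 < pi1 (P m) (f m) (theta m) i d.
  by case/andP: (pi_in01 m i d).
have dk_mem : dk \in [:: dk; dl] := mem_head _ _.
have dl_mem : dl \in [:: dk; dl] by rewrite !inE eqxx orbT.
pose density m := dependence_density (P m) (f m) (theta m).
apply: (squeeze_cvgr (f := fun=> 0) (h := fun m => (c / eps) ^+ 2 *
  (density m dk dk + density m dk dl + density m dl dk + density m dl dl))).
- apply: nearW => m; rewrite prob_ge0 //=.
  exact: prob_ht_deviation_le.
- exact: cvg_cst.
- have density_cvg : (fun m => (c / eps) ^+ 2 * (density m dk dk + density m dk dl
      + density m dl dk + density m dl dl)) @ \oo --> (c / eps) ^+ 2 * (0 + 0 + 0 + 0).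
    apply: cvgM (cvg_cst _) _.
    exact: cvgD (cvgD (cvgD (sparse _ _ dk_mem dk_mem) (sparse _ _ dk_mem dl_mem))
      (sparse _ _ dl_mem dk_mem)) (sparse _ _ dl_mem dl_mem).
  by rewrite !addr0 mulr0 in density_cvg.
Qed.
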